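(* Let $C$ be a coin operator on $\mathcal H=\ell^2(\mathbb{Z})\otimes\mathbb{C}^2$ with local unitary coins $C(k)$, let $U=SC$ with $S=S_+S_-$, and for $\Phi\in\mathbb{R}$ let $U_\Phi=F_\Phi U$ with $F_\Phi=e^{i\Phi Q}$. Then, with respect to the decomposition $\mathcal H=\mathcal H_e\oplus\mathcal H_o$ into even and odd lattice sites (each identified with $\ell^2(\mathbb{Z})\otimes\mathbb{C}^2$ as below), $$U_{\Phi/2}^2=\left(e^{-i\Phi/2}\tilde F_\Phi W\right)\oplus\left(e^{i\Phi/2}\tilde F_\Phi\tilde W\right),$$ where $W=S_+C_1S_-C_2$ and $\tilde W=S_+\tilde C_1S_-\tilde C_2$ have local coins $C_1(k)=C(2k+1)$, $C_2(k)=C(2k)$, $\tilde C_1(k)=C(2k+2)$, $\tilde C_2(k)=C(2k+1)$, and $\tilde F_\Phi=\left(\mathbb{1}_{\mathbb{Z}}\otimes\begin{bmatrix}1&0\\0&e^{i\Phi}\end{bmatrix}\right)e^{2i\Phi Q}$ acts on $\ell^2(\mathbb{Z})\otimes\mathbb{C}^2$.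
   Context: $\mathcal H=\ell^2(\mathbb{Z})\otimes\mathbb{C}^2$ with basis $\delta_k^\pm=\delta_k\otimes e_\pm$, $e_+=(1,0)^\top$, $e_-=(0,1)^\top$. $T$ is the bilateral shift $\delta_k\mapsto\delta_{k+1}$, $P_\pm=|e_\pm\rangle\langle e_\pm|$, $S_\pm=T^{\pm1}\otimes P_\pm+\mathbb{1}_{\mathbb{Z}}\otimes P_\mp$. A coin operator acts as $C(\delta_k\otimes v)=\delta_k\otimes C(k)v$. $Q$ is the position operator $Q\delta_k^\pm=k\delta_k^\pm$ (on whichever copy of $\ell^2(\mathbb{Z})\otimes\mathbb{C}^2$ is considered). $\mathcal H_e=\ell^2(2\mathbb{Z})\otimes\mathbb{C}^2$, $\mathcal H_o=\ell^2(2\mathbb{Z}+1)\otimes\mathbb{C}^2$, identified with $\ell^2(\mathbb{Z})\otimes\mathbb{C}^2$ via $\delta_{2k}^\pm\mapsto\delta_k^\pm$ and $\delta_{2k+1}^\pm\mapsto\delta_k^\pm$ respectively. *)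

From HB Require Import structures.
From mathcomp Require Import all_boot all_order all_algebra.
From mathcomp Require Import spectral.
From mathcomp Require Import complex.
From mathcomp Require Import reals trigo.
Set Implicit Arguments. Unset Strict Implicit. Unset Printing Implicit Defensive.
Import Order.TTheory GRing.Theory Num.Theory.
Local Open Scope ring_scope.
Local Open Scope complex_scope.

Section QW.
Variable R : realType.
Local Notation C := R[i].

(* Vectors of l^2(Z) (x) C^2 are modelled by functions Z -> C^2; all operators
   below are local (finite band), so they act on arbitrary such functions. *)
Definition vec := int -> 'cV[C]_2.
Definition op := vec -> vec.

Definition e_plus : 'I_2 := ord0.
Definition e_minus : 'I_2 := @Ordinal 2 1 isT.
Definition Pplus : 'M[C]_2 := delta_mx e_plus e_plus.
Definition Pminus : 'M[C]_2 := delta_mx e_minus e_minus.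

Definition expi (t : R) : C := (cos t) +i* (sin t).

(* S_+ = T (x) P_+ + 1 (x) P_-,  S_- = T^{-1} (x) P_- + 1 (x) P_+,
   where T delta_k = delta_{k+1}, i.e. (T psi)(k) = psi(k-1). *)
Definition Splus : op := fun psi k => Pplus *m psi (k - 1) + Pminus *m psi k.
Definition Sminus : op := fun psi k => Pminus *m psi (k + 1) + Pplus *m psi k.

Definition coin (c : int -> 'M[C]_2) : op := fun psi k => c k *m psi k.

Definition Fphase (Phi : R) : op := fun psi k => expi (Phi * k%:~R) *: psi k.

Definition Ftilde (Phi : R) : op :=
  fun psi k => (Pplus + expi Phi *: Pminus) *m (expi (2 * Phi * k%:~R) *: psi k).

Definition Uwalk (c : int -> 'M[C]_2) : op := fun psi => Splus (Sminus (coin c psi)).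
Definition UPhi (Phi : R) (c : int -> 'M[C]_2) : op := fun psi => Fphase Phi (Uwalk c psi).

Definition Wop (c1 c2 : int -> 'M[C]_2) : op :=
  fun psi => Splus (coin c1 (Sminus (coin c2 psi))).

Definition even_part (psi : vec) : vec := fun k => psi (2 * k).
Definition odd_part (psi : vec) : vec := fun k => psi (2 * k + 1).

End QW.

From HB Require Import structures.
From mathcomp Require Import all_boot all_order all_algebra.
From mathcomp Require Import spectral complex.
From mathcomp Require Import reals trigo.
From mathcomp Require Import ring.
Import Order.TTheory GRing.Theory Num.Theory.
Local Open Scope ring_scope.
Local Open Scope complex_scope.

(* One step of U is (U psi)(n) = P_+ C(n-1) psi(n-1) + P_- C(n+1) psi(n+1), so
   U^2 preserves the parity of sites, and on the sublattice 2Z + r it is, term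
   by term, the walk W built from the coins C(2j+1+r) and C(2j+r).  With the
   phases, the two steps of a path ending at n pick up e^{i Phi (2n-1)/2} when
   the last step moves right (P_+) and e^{i Phi (2n+1)/2} when it moves left
   (P_-); their ratio e^{i Phi} is the diagonal factor of F~_Phi, and for
   n = 2k + r the common factor is e^{2 i Phi k} e^{i Phi (r - 1/2)}. *)

Section Walk.
Variable R : realType.
Local Notation Pp := (Pplus R).
Local Notation Pm := (Pminus R).

Lemma expiD (a b : R) : expi (a + b) = expi a * expi b.
Proof. by rewrite /expi cosD sinD /=; congr (_ +i* _); ring. Qed.

Lemma Pplus_mul_Pplus : Pp *m Pp = Pp. Proof. exact: mul_delta_mx. Qed.
Lemma Pminus_mul_Pminus : Pm *m Pm = Pm. Proof. exact: mul_delta_mx. Qed.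
Lemma Pplus_mul_Pminus : Pp *m Pm = 0. Proof. exact: mul_delta_mx_0. Qed.
Lemma Pminus_mul_Pplus : Pm *m Pp = 0. Proof. exact: mul_delta_mx_0. Qed.

Definition projE := (Pplus_mul_Pplus, Pminus_mul_Pminus,
  Pplus_mul_Pminus, Pminus_mul_Pplus, mul0mx, addr0, add0r).

Lemma diag_phase_mul (a : R[i]) (u v : 'cV[R[i]]_2) :
  (Pp + a *: Pm) *m (Pp *m u + Pm *m v) = Pp *m u + a *: (Pm *m v).
Proof. by rewrite mulmxDl !mulmxDr -!scalemxAl !mulmxA !projE scaler0 add0r. Qed.

Lemma Uwalk_E (c : int -> 'M[R[i]]_2) (psi : vec R) n :
  Uwalk c psi n = Pp *m (c (n - 1) *m psi (n - 1)) + Pm *m (c (n + 1) *m psi (n + 1)).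
Proof. by rewrite /Uwalk /Splus /Sminus /coin !mulmxDr !mulmxA !projE. Qed.

Lemma Wop_E (c1 c2 : int -> 'M[R[i]]_2) (psi : vec R) k :
  Wop c1 c2 psi k =
    Pp *m (c1 (k - 1) *m (Pp *m (c2 (k - 1) *m psi (k - 1)) + Pm *m (c2 k *m psi k)))
  + Pm *m (c1 k *m (Pp *m (c2 k *m psi k) + Pm *m (c2 (k + 1) *m psi (k + 1)))).
Proof. by rewrite /Wop /Splus /Sminus /coin subrK !(addrC (Pm *m _)). Qed.

Lemma UPhi_sqr Phi (c : int -> 'M[R[i]]_2) (psi : vec R) n :
  UPhi Phi c (UPhi Phi c psi) n =
    expi (Phi * (2 * n - 1)%:~R) *:
      ((Pp + expi (2 * Phi) *: Pm) *m Uwalk c (Uwalk c psi) n).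
Proof.
(* Abstracting [Uwalk c psi] keeps rewriting from unfolding it. *)
rewrite /UPhi /Fphase; move: (Uwalk c psi) => phi.
rewrite !Uwalk_E diag_phase_mul -!scalemxAr !scalerDr !scalerA -!expiD.
by congr (expi _ *: _ + expi _ *: _); rewrite !(intrD, intrM, intrN); ring.
Qed.

Lemma Uwalk_sqr_E (c : int -> 'M[R[i]]_2) (psi : vec R) n :
  Uwalk c (Uwalk c psi) n =
    Pp *m (c (n - 1) *m (Pp *m (c (n - 1 - 1) *m psi (n - 1 - 1)) + Pm *m (c n *m psi n)))
  + Pm *m (c (n + 1) *m (Pp *m (c n *m psi n) + Pm *m (c (n + 1 + 1) *m psi (n + 1 + 1)))).
Proof. by rewrite !Uwalk_E subrK addrK. Qed.

Lemma Uwalk_sqr_sublattice {c : int -> 'M[R[i]]_2} {psi : vec R} {r : int}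
    {c1 c2 : int -> 'M[R[i]]_2} {phi : vec R} :
  c1 =1 (fun j => c (2 * j + 1 + r)) -> c2 =1 (fun j => c (2 * j + r)) ->
  phi =1 (fun j => psi (2 * j + r)) ->
  forall k, Uwalk c (Uwalk c psi) (2 * k + r) = Wop c1 c2 phi k.
Proof.
move=> c1E c2E phiE k; rewrite Uwalk_sqr_E Wop_E.
have e1 : 2 * (k - 1) + 1 + r = 2 * k + r - 1 by ring.
have e2 : 2 * (k - 1) + r = 2 * k + r - 1 - 1 by ring.
have e3 : 2 * k + 1 + r = 2 * k + r + 1 by ring.
have e4 : 2 * (k + 1) + r = 2 * k + r + 1 + 1 by ring.
by rewrite !c1E !c2E !phiE e1 e3 e2 e4.
Qed.

Lemma Ftilde_E Phi (psi : vec R) k :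
  Ftilde Phi psi k = expi (2 * Phi * k%:~R) *: ((Pp + expi Phi *: Pm) *m psi k).
Proof. by rewrite /Ftilde -scalemxAr. Qed.

Lemma UPhi_half_sqr_sublattice {Phi : R} {c : int -> 'M[R[i]]_2} {psi : vec R} {r : int}
    {c1 c2 : int -> 'M[R[i]]_2} {phi : vec R} :
  c1 =1 (fun j => c (2 * j + 1 + r)) -> c2 =1 (fun j => c (2 * j + r)) ->
  phi =1 (fun j => psi (2 * j + r)) ->
  forall k, UPhi (Phi / 2) c (UPhi (Phi / 2) c psi) (2 * k + r) =
    expi (Phi * (r%:~R - 2^-1)) *: Ftilde Phi (Wop c1 c2 phi) k.
Proof.
move=> c1E c2E phiE k.
rewrite UPhi_sqr (Uwalk_sqr_sublattice c1E c2E phiE) Ftilde_E scalerA -expiD.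
have -> : 2 * (Phi / 2) = Phi by field.
by congr (expi _ *: _); rewrite !(intrD, intrM); field.
Qed.

End Walk.

Theorem corollary3p3 (R : realType) (c : int -> 'M[R[i]]_2)
  (hc : forall k, c k \is unitarymx) (Phi : R) (psi : vec R) (k : int) :
  UPhi (Phi / 2) c (UPhi (Phi / 2) c psi) (2 * k)
    = expi (- (Phi / 2)) *:
        Ftilde Phi (Wop (fun j => c (2 * j + 1)) (fun j => c (2 * j)) (even_part psi)) k
  /\
  UPhi (Phi / 2) c (UPhi (Phi / 2) c psi) (2 * k + 1)
    = expi (Phi / 2) *:
        Ftilde Phi (Wop (fun j => c (2 * j + 2)) (fun j => c (2 * j + 1)) (odd_part psi)) k.
Proof.
split.
{ rewrite -(addr0 (2 * k)) (@UPhi_half_sqr_sublattice _ Phi c psi 0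
    (fun j => c (2 * j + 1)) (fun j => c (2 * j)) (even_part psi)).
  { by congr (expi _ *: _); ring. }
  all: by move=> j; rewrite addr0. }
rewrite (@UPhi_half_sqr_sublattice _ Phi c psi 1
  (fun j => c (2 * j + 2)) (fun j => c (2 * j + 1)) (odd_part psi)).
{ by congr (expi _ *: _); field. }
{ by move=> j; rewrite -addrA. }
all: by [].
Qed.
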